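(* Let $M\models\mathrm{AA}$, let $I\subseteq M$ be a proper cut and let $D\subseteq M$ be formula-definable with $I\subseteq D$. Then for every $\epsilon>0$ there exists $a\in M\setminus I$ such that $[0,a]\subseteq D^\epsilon$.
   Context: Structures are complete metric spaces of diameter at most $1$ in the language $L=\{+,\cdot,\wedge,\vee,0,1\}$ (operations $1$-Lipschitz, $d$ the only relation symbol). Affine formulas are built from $1$ and atomic formulas $d(t_1,t_2)$ using $+$, scalar multiplication by reals, $\sup_x$, $\inf_x$. $\mathrm{AA}$ is the set of all closed affine conditions true in every model of first-order Peano arithmetic (formulated in $L$ with lattice operations min/max and discrete metric). $x\le y$ means $x\wedge y=x$; $[0,a]=\{u\in M:u\le a\}$. A cut is a nonempty $I\subseteq M$ with $x\le y\in I\Rightarrow x\in I$ and $x\in I\Rightarrow x+1\in I$; proper means $I\ne M$. A set $D$ is formula-definable if it is closed and $d(x,D)=\phi^M(x)$ for all $x$ for some affine formula $\phi$ with parameters from $M$. $D^\epsilon=\{x\in M: d(x,D)<\epsilon\}$. *)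

From Stdlib Require Import Reals ClassicalEpsilon.
From Coquelicot Require Import Rbar Lub.
Open Scope R_scope.

Record Lsig := {
  car :> Type;
  dist : car -> car -> R;
  Ladd : car -> car -> car;
  Lmul : car -> car -> car;
  Lmeet : car -> car -> car;
  Ljoin : car -> car -> car;
  Lzero : car;
  Lone : car
}.

Definition lip2 (S : Lsig) (f : S -> S -> S) : Prop :=
  forall x x' y y', dist S (f x y) (f x' y') <= Rmax (dist S x x') (dist S y y').

Record LStructure := {
  Lsig_of :> Lsig;
  d_refl : forall x, dist Lsig_of x x = 0;
  d_sep : forall x y, dist Lsig_of x y = 0 -> x = y;
  d_sym : forall x y, dist Lsig_of x y = dist Lsig_of y x;
  d_tri : forall x y z, dist Lsig_of x z <= dist Lsig_of x y + dist Lsig_of y z;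
  d_diam : forall x y, dist Lsig_of x y <= 1;
  d_complete : forall u : nat -> Lsig_of,
    (forall e, 0 < e -> exists N, forall m n, (N <= m)%nat -> (N <= n)%nat ->
        dist Lsig_of (u m) (u n) < e) ->
    exists x, forall e, 0 < e -> exists N, forall n, (N <= n)%nat ->
        dist Lsig_of (u n) x < e;
  lip_add : lip2 Lsig_of (Ladd Lsig_of);
  lip_mul : lip2 Lsig_of (Lmul Lsig_of);
  lip_meet : lip2 Lsig_of (Lmeet Lsig_of);
  lip_join : lip2 Lsig_of (Ljoin Lsig_of)
}.

Inductive term :=
| tvar : nat -> term
| tzero : term
| tone : term
| tadd : term -> term -> term
| tmul : term -> term -> term
| tmeet : term -> term -> term
| tjoin : term -> term -> term.

Inductive aformula :=
| aone : aformula
| adist : term -> term -> aformula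
| aplus : aformula -> aformula -> aformula
| ascale : R -> aformula -> aformula
| asup : nat -> aformula -> aformula
| ainf : nat -> aformula -> aformula.

Fixpoint tfree (n : nat) (t : term) : Prop :=
  match t with
  | tvar m => n = m
  | tzero | tone => False
  | tadd a b | tmul a b | tmeet a b | tjoin a b => tfree n a \/ tfree n b
  end.

Fixpoint afree (n : nat) (p : aformula) : Prop :=
  match p with
  | aone => False
  | adist a b => tfree n a \/ tfree n b
  | aplus p q => afree n p \/ afree n q
  | ascale _ p => afree n p
  | asup m p | ainf m p => n <> m /\ afree n p
  end.

Definition asentence (p : aformula) : Prop := forall n, ~ afree n p.

Definition upd {A : Type} (s : nat -> A) (n : nat) (x : A) : nat -> A :=
  fun m => if Nat.eqb m n then x else s m.

Fixpoint teval (S : Lsig) (s : nat -> S) (t : term) : S :=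
  match t with
  | tvar m => s m
  | tzero => Lzero S
  | tone => Lone S
  | tadd a b => Ladd S (teval S s a) (teval S s b)
  | tmul a b => Lmul S (teval S s a) (teval S s b)
  | tmeet a b => Lmeet S (teval S s a) (teval S s b)
  | tjoin a b => Ljoin S (teval S s a) (teval S s b)
  end.

Fixpoint aeval (S : Lsig) (s : nat -> S) (p : aformula) : R :=
  match p with
  | aone => 1
  | adist a b => dist S (teval S s a) (teval S s b)
  | aplus p q => aeval S s p + aeval S s q
  | ascale r p => r * aeval S s p
  | asup m p => real (Lub_Rbar (fun r => exists x : S, r = aeval S (upd s m x) p))
  | ainf m p => real (Glb_Rbar (fun r => exists x : S, r = aeval S (upd s m x) p))
  end.

Inductive pterm :=
| pvar : nat -> pterm
| pzero : pterm
| pone : pterm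
| padd : pterm -> pterm -> pterm
| pmul : pterm -> pterm -> pterm.

Inductive pformula :=
| peq : pterm -> pterm -> pformula
| pbot : pformula
| pimp : pformula -> pformula -> pformula
| pall : nat -> pformula -> pformula.

Record PAsig := {
  pcar :> Type;
  pz : pcar;
  po : pcar;
  pa : pcar -> pcar -> pcar;
  pm : pcar -> pcar -> pcar
}.

Fixpoint pteval (N : PAsig) (s : nat -> N) (t : pterm) : N :=
  match t with
  | pvar m => s m
  | pzero => pz N
  | pone => po N
  | padd a b => pa N (pteval N s a) (pteval N s b)
  | pmul a b => pm N (pteval N s a) (pteval N s b)
  end.

Fixpoint psat (N : PAsig) (s : nat -> N) (f : pformula) : Prop :=
  match f with
  | peq a b => pteval N s a = pteval N s b
  | pbot => False
  | pimp f g => psat N s f -> psat N s g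
  | pall m f => forall x : N, psat N (upd s m x) f
  end.

Record PAModel := {
  PA_sig :> PAsig;
  PA1 : forall x, pa PA_sig x (po PA_sig) <> pz PA_sig;
  PA2 : forall x y, pa PA_sig x (po PA_sig) = pa PA_sig y (po PA_sig) -> x = y;
  PA3 : forall x, pa PA_sig x (pz PA_sig) = x;
  PA4 : forall x y, pa PA_sig x (pa PA_sig y (po PA_sig))
                    = pa PA_sig (pa PA_sig x y) (po PA_sig);
  PA5 : forall x, pm PA_sig x (pz PA_sig) = pz PA_sig;
  PA6 : forall x y, pm PA_sig x (pa PA_sig y (po PA_sig))
                    = pa PA_sig (pm PA_sig x y) x;
  PAind : forall (f : pformula) (n : nat) (s : nat -> PA_sig),
    psat PA_sig (upd s n (pz PA_sig)) f ->
    (forall x, psat PA_sig (upd s n x) f ->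
               psat PA_sig (upd s n (pa PA_sig x (po PA_sig))) f) ->
    forall x, psat PA_sig (upd s n x) f
}.

Definition PAle (N : PAModel) (x y : N) : Prop := exists z, pa N x z = y.

Definition PAmin (N : PAModel) (x y : N) : N :=
  if excluded_middle_informative (PAle N x y) then x else y.
Definition PAmax (N : PAModel) (x y : N) : N :=
  if excluded_middle_informative (PAle N x y) then y else x.
Definition discrete_d (N : PAModel) (x y : N) : R :=
  if excluded_middle_informative (x = y) then 0 else 1.

Definition PA_L (N : PAModel) : Lsig := {|
  car := pcar N;
  dist := discrete_d N;
  Ladd := pa N;
  Lmul := pm N;
  Lmeet := PAmin N;
  Ljoin := PAmax N;
  Lzero := pz N;
  Lone := po N
|}.

(* AA: closed affine conditions (phi <= 0, phi a sentence) true in all models of PA.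
   (Conditions phi >= 0 / phi = 0 are expressible as -phi <= 0 etc.) *)
Definition AA (p : aformula) : Prop :=
  asentence p /\ forall (N : PAModel) (s : nat -> PA_L N), aeval (PA_L N) s p <= 0.

Definition models_AA (M : LStructure) : Prop :=
  forall p, AA p -> forall s : nat -> M, aeval M s p <= 0.

Definition Lle (M : LStructure) (x y : M) : Prop := Lmeet M x y = x.

Definition is_cut (M : LStructure) (I : M -> Prop) : Prop :=
  (exists x, I x) /\
  (forall x y, Lle M x y -> I y -> I x) /\
  (forall x, I x -> I (Ladd M x (Lone M))).

Definition proper_cut (M : LStructure) (I : M -> Prop) : Prop :=
  is_cut M I /\ exists x, ~ I x.

Definition dist_set (M : LStructure) (x : M) (D : M -> Prop) : R :=
  real (Glb_Rbar (fun r => exists y, D y /\ r = dist M x y)).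

Definition closed_set (M : LStructure) (D : M -> Prop) : Prop :=
  forall x, (forall e, 0 < e -> exists y, D y /\ dist M x y < e) -> D x.

(* formula-definable: closed, and d(x,D) = phi^M(x) for an affine formula phi
   in free variable 0, other free variables being parameters given by s *)
Definition formula_definable (M : LStructure) (D : M -> Prop) : Prop :=
  closed_set M D /\
  exists (p : aformula) (s : nat -> M),
    forall x, dist_set M x D = aeval M (upd s 0 x) p.

Definition eps_nbhd (M : LStructure) (D : M -> Prop) (e : R) : M -> Prop :=
  fun x => dist_set M x D < e.

(* Let G(x) = sup_{u <= x} d(u, D). Since d(-, D) is defined by an affine formula, so is G; it
   vanishes on I, is nondecreasing and 1-Lipschitz.
   In a model of PA an affine formula psi(x) takes only finitely many values, and each level set
   {psi = v} is first-order definable. So if psi(b) > psi(0), induction on b yields a < b with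
   psi(a + 1) > psi(a), a jump of at least the least gap g between two values. Hence
     psi(b) - psi(0) <= C * sup_v (psi((v /\ b + 1) /\ b) - psi(v /\ b))
   with C depending only on psi. This closed affine condition belongs to AA, so it holds of G in M.
   If the theorem failed, G would be >= eps outside I while G(0) = 0, and the condition would
   produce from every b outside I some a = v /\ b outside I with G(a) <= G(b) - eps / 2C: an
   infinite descent of a nonnegative function. *)

From Pilot Require Import Defs.
From Stdlib Require Import Reals Lra Lia List Classical ClassicalEpsilon FunctionalExtensionality.
From Coquelicot Require Import Rbar Lub.
Open Scope R_scope.

Lemma Rabs_le_iff x b : Rabs x <= b <-> - b <= x <= b.
Proof. split; intros; split_Rabs; lra. Qed.

Lemma Lub_Rbar_between (E : R -> Prop) y b :
  E y -> (forall z, E z -> z <= b) -> y <= real (Lub_Rbar E) <= b.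
Proof.
  intros Hy Hb. destruct (Lub_Rbar_correct E) as [Hub Hlub].
  assert (Hge := Hub y Hy).
  assert (Hle : Rbar_le (Lub_Rbar E) b) by (apply Hlub; intros z Hz; apply Hb, Hz).
  destruct (Lub_Rbar E); simpl in *; tauto.
Qed.

Lemma Lub_Rbar_eq_max (E : R -> Prop) w : E w -> (forall y, E y -> y <= w) -> real (Lub_Rbar E) = w.
Proof.
  intros Hw Hb. rewrite (is_lub_Rbar_unique E (Finite w)); [reflexivity|].
  split; [intros y Hy; apply Hb, Hy|]. intros b Hub. apply Hub, Hw.
Qed.

Lemma Glb_Rbar_between (E : R -> Prop) y b :
  E y -> (forall z, E z -> b <= z) -> b <= real (Glb_Rbar E) <= y.
Proof.
  intros Hy Hb. destruct (Glb_Rbar_correct E) as [Hlb Hglb].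
  assert (Hle := Hlb y Hy).
  assert (Hge : Rbar_le b (Glb_Rbar E)) by (apply Hglb; intros z Hz; apply Hb, Hz).
  destruct (Glb_Rbar E); simpl in *; tauto.
Qed.

Lemma Glb_Rbar_eq_min (E : R -> Prop) w : E w -> (forall y, E y -> w <= y) -> real (Glb_Rbar E) = w.
Proof.
  intros Hw Hb. rewrite (is_glb_Rbar_unique E (Finite w)); [reflexivity|].
  split; [intros y Hy; apply Hb, Hy|]. intros b Hlb. apply Hlb, Hw.
Qed.

Section Environments.
Context {A : Type}.

Lemma upd_eq (s : nat -> A) n x : upd s n x n = x.
Proof. unfold upd. now rewrite Nat.eqb_refl. Qed.

Lemma upd_neq (s : nat -> A) n x m : m <> n -> upd s n x m = s m.
Proof. intros H. unfold upd. destruct (Nat.eqb_spec m n); congruence. Qed.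

Lemma upd_id (s : nat -> A) n : upd s n (s n) = s.
Proof.
  apply functional_extensionality; intro m. unfold upd. destruct (Nat.eqb_spec m n); congruence.
Qed.

Lemma upd_comm (s : nat -> A) n m x y : n <> m -> upd (upd s n x) m y = upd (upd s m y) n x.
Proof.
  intros H. apply functional_extensionality; intro k. unfold upd.
  destruct (Nat.eqb_spec k m); destruct (Nat.eqb_spec k n); congruence.
Qed.

Lemma upd_upd (s : nat -> A) n x y : upd (upd s n x) n y = upd s n y.
Proof.
  apply functional_extensionality; intro k. unfold upd. destruct (Nat.eqb_spec k n); congruence.
Qed.

End Environments.

Fixpoint tmaxvar (t : term) : nat :=
  match t with
  | tvar m => m
  | tzero | tone => 0%nat
  | tadd a b | tmul a b | tmeet a b | tjoin a b => Nat.max (tmaxvar a) (tmaxvar b)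
  end.

Fixpoint amaxvar (q : aformula) : nat :=
  match q with
  | aone => 0%nat
  | adist a b => Nat.max (tmaxvar a) (tmaxvar b)
  | aplus p q => Nat.max (amaxvar p) (amaxvar q)
  | ascale _ p => amaxvar p
  | asup m p | ainf m p => Nat.max m (amaxvar p)
  end.

Lemma teval_agree S t s1 s2 : (forall n, (n <= tmaxvar t)%nat -> s1 n = s2 n) ->
  teval S s1 t = teval S s2 t.
Proof.
  induction t; simpl; intros H; try rewrite IHt1; try rewrite IHt2; auto;
    try (intros; apply H; lia).
Qed.

Lemma aeval_agree S q : forall s1 s2, (forall n, (n <= amaxvar q)%nat -> s1 n = s2 n) ->
  aeval S s1 q = aeval S s2 q.
Proof.
  induction q; simpl; intros s1 s2 H; auto.
  - rewrite (teval_agree S t s1 s2), (teval_agree S t0 s1 s2); auto; intros; apply H; lia.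
  - rewrite (IHq1 s1 s2), (IHq2 s1 s2); auto; intros; apply H; lia.
  - rewrite (IHq s1 s2); auto.
  - rewrite (Lub_Rbar_eqset _ (fun r => exists x : S, r = aeval S (upd s2 n x) q)); auto.
    intros r; split; intros [x Hx]; exists x; rewrite Hx; apply IHq; intros k Hk;
      unfold upd; destruct (Nat.eqb k n); auto; [|symmetry]; apply H; lia.
  - rewrite (Glb_Rbar_eqset _ (fun r => exists x : S, r = aeval S (upd s2 n x) q)); auto.
    intros r; split; intros [x Hx]; exists x; rewrite Hx; apply IHq; intros k Hk;
      unfold upd; destruct (Nat.eqb k n); auto; [|symmetry]; apply H; lia.
Qed.

Lemma teval_upd_fresh S t s n x : (tmaxvar t < n)%nat -> teval S (upd s n x) t = teval S s t.
Proof. intros H; apply teval_agree; intros k Hk; apply upd_neq; lia. Qed.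

Lemma aeval_upd_fresh S q s n x : (amaxvar q < n)%nat -> aeval S (upd s n x) q = aeval S s q.
Proof. intros H; apply aeval_agree; intros k Hk; apply upd_neq; lia. Qed.

Lemma aeval_upd_upd_fresh S q s n m x y : (amaxvar q < m)%nat -> m <> n ->
  aeval S (upd (upd s m y) n x) q = aeval S (upd s n x) q.
Proof. intros H1 H2. rewrite upd_comm by auto. now apply aeval_upd_fresh. Qed.

Lemma teval_upd_notfree S t s n x : ~ tfree n t -> teval S (upd s n x) t = teval S s t.
Proof.
  induction t; simpl; intros H; try (rewrite IHt1, IHt2; tauto); auto.
  apply upd_neq; auto.
Qed.

Lemma tfree_le_tmaxvar n t : tfree n t -> (n <= tmaxvar t)%nat.
Proof.
  induction t; simpl; intros H; try lia; try tauto;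
    (destruct H as [H|H]; [apply IHt1 in H|apply IHt2 in H]; lia).
Qed.

Lemma afree_le_amaxvar n q : afree n q -> (n <= amaxvar q)%nat.
Proof.
  induction q; simpl; intros H; try tauto.
  - destruct H as [H|H]; apply tfree_le_tmaxvar in H; lia.
  - destruct H as [H|H]; [apply IHq1 in H|apply IHq2 in H]; lia.
  - auto.
  - destruct H as [_ H]; apply IHq in H; lia.
  - destruct H as [_ H]; apply IHq in H; lia.
Qed.

Definition unit_dist (S : Lsig) : Prop :=
  (forall x y, 0 <= Defs.dist S x y <= 1) /\ (forall x y, Defs.dist S x y = Defs.dist S y x) /\
  (forall x, Defs.dist S x x = 0).

Lemma PA_unit_dist (N : PAModel) : unit_dist (PA_L N).
Proof.
  split; [|split]; simpl; unfold discrete_d; intros.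
  - destruct (excluded_middle_informative (x = y)); lra.
  - destruct (excluded_middle_informative (x = y)), (excluded_middle_informative (y = x)); congruence.
  - destruct (excluded_middle_informative (x = x)); congruence.
Qed.

Lemma dist_nonneg (M : LStructure) x y : 0 <= Defs.dist M x y.
Proof. pose proof (d_tri M x y x). rewrite d_refl, (d_sym M y x) in H. lra. Qed.

Lemma LStructure_unit_dist (M : LStructure) : unit_dist M.
Proof.
  split; [|split]; intros.
  - split; [apply dist_nonneg|apply d_diam].
  - apply d_sym.
  - apply d_refl.
Qed.

Fixpoint abound (q : aformula) : R :=
  match q with
  | aone | adist _ _ => 1
  | aplus p q => abound p + abound q
  | ascale c p => Rabs c * abound p
  | asup _ p | ainf _ p => abound p
  end.

Lemma abound_nonneg q : 0 <= abound q.
Proof. induction q; simpl; try lra; auto. apply Rmult_le_pos; auto; apply Rabs_pos. Qed.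

Section UnitDistance.
Variables (L : Lsig) (HL : unit_dist L).

Lemma aeval_abs_le q : forall s, Rabs (aeval L s q) <= abound q.
Proof.
  destruct HL as [Hd _].
  induction q; simpl; intros s.
  - rewrite Rabs_R1; lra.
  - apply Rabs_le_iff. specialize (Hd (teval L s t) (teval L s t0)). lra.
  - specialize (IHq1 s); specialize (IHq2 s). apply Rabs_le_iff in IHq1, IHq2. apply Rabs_le_iff; lra.
  - rewrite Rabs_mult. apply Rmult_le_compat_l; auto. apply Rabs_pos.
  - destruct (Lub_Rbar_between (fun r => exists x : L, r = aeval L (upd s n x) q)
      (aeval L (upd s n (Lzero L)) q) (abound q)) as [H1 H2]; eauto.
    + intros y [x ->]. specialize (IHq (upd s n x)). apply Rabs_le_iff in IHq; lra.
    + specialize (IHq (upd s n (Lzero L))). apply Rabs_le_iff in IHq. apply Rabs_le_iff; lra.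
  - destruct (Glb_Rbar_between (fun r => exists x : L, r = aeval L (upd s n x) q)
      (aeval L (upd s n (Lzero L)) q) (- abound q)) as [H1 H2]; eauto.
    + intros y [x ->]. specialize (IHq (upd s n x)). apply Rabs_le_iff in IHq; lra.
    + specialize (IHq (upd s n (Lzero L))). apply Rabs_le_iff in IHq. apply Rabs_le_iff; lra.
Qed.

Lemma aeval_asup_ge s m q x : aeval L (upd s m x) q <= aeval L s (asup m q).
Proof.
  simpl. apply (Lub_Rbar_between _ _ (abound q)); eauto.
  intros y [z ->]. pose proof (aeval_abs_le q (upd s m z)). apply Rabs_le_iff in H; lra.
Qed.

Lemma aeval_asup_le s m q c : (forall x, aeval L (upd s m x) q <= c) -> aeval L s (asup m q) <= c.
Proof.
  intros H. simpl. apply (Lub_Rbar_between _ (aeval L (upd s m (Lzero L)) q)); eauto.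
  intros y [z ->]; auto.
Qed.

Definition asubst_lip (psi : aformula) : R := 2 * abound psi + 1.

(* [psi[t/X]] as an affine formula: [inf_X (psi + K d(X, t))] with [K = asubst_lip psi] equals
   [psi[t/X]] whenever [psi] is [K]-Lipschitz in [X], e.g. when the metric is {0,1}-valued. *)
Definition asubst (psi : aformula) (X : nat) (t : term) : aformula :=
  ainf X (aplus psi (ascale (asubst_lip psi) (adist (tvar X) t))).

Lemma aeval_asubst psi X t s (f : L -> R) :
  ~ tfree X t ->
  (forall x, aeval L (upd s X x) psi = f x) ->
  (forall x y, f x <= f y + asubst_lip psi * Defs.dist L x y) ->
  aeval L s (asubst psi X t) = f (teval L s t).
Proof.
  intros Ht Hf Hlip. destruct HL as [_ [Hsym Hrefl]]. simpl.
  apply Glb_Rbar_eq_min.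
  - exists (teval L s t). simpl. rewrite Hf, upd_eq, teval_upd_notfree, Hrefl by auto. lra.
  - intros y [x ->]. simpl. rewrite Hf, upd_eq, teval_upd_notfree by auto.
    specialize (Hlip (teval L s t) x). rewrite Hsym in Hlip. lra.
Qed.

Fixpoint aclosure (k : nat) (q : aformula) : aformula :=
  match k with O => q | S k => aclosure k (asup k q) end.

Lemma afree_aclosure k : forall q n, afree n (aclosure k q) -> (k <= n)%nat /\ afree n q.
Proof.
  induction k; simpl; intros q n H; [split; auto; lia|].
  apply IHk in H. simpl in H. destruct H as [H1 [H2 H3]]. split; auto; lia.
Qed.

Lemma aeval_le_aclosure k : forall q s, aeval L s q <= aeval L s (aclosure k q).
Proof.
  induction k; simpl; intros q s; [lra|].
  eapply Rle_trans; [|apply IHk].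
  pattern s at 1. rewrite <- (upd_id s k). apply aeval_asup_ge.
Qed.

Lemma aclosure_nonpos k : forall q, (forall s, aeval L s q <= 0) -> forall s, aeval L s (aclosure k q) <= 0.
Proof.
  induction k; simpl; intros q H s; auto.
  apply IHk. intros s'. apply aeval_asup_le; auto.
Qed.

End UnitDistance.

Lemma models_AA_transfer (M : LStructure) (HM : models_AA M) q :
  (forall (N : PAModel) e, aeval (PA_L N) e q <= 0) -> forall s, aeval M s q <= 0.
Proof.
  intros H s.
  assert (HA : AA (aclosure (S (amaxvar q)) q)).
  { split.
    - intros n Hn. apply afree_aclosure in Hn. destruct Hn as [H1 H2].
      apply afree_le_amaxvar in H2. lia.
    - intros N e. apply aclosure_nonpos, H. }
  eapply Rle_trans; [|apply (HM _ HA s)]. apply aeval_le_aclosure, LStructure_unit_dist.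
Qed.

(** * Definability and arithmetic in models of PA *)

Section PeanoArithmetic.
Variable N : PAModel.

Definition PAdef (R : (nat -> N) -> Prop) : Prop := exists f, forall s, R s <-> psat N s f.

Lemma PAdef_ext (R R' : (nat -> N) -> Prop) : (forall s, R s <-> R' s) -> PAdef R -> PAdef R'.
Proof. intros H [f Hf]. exists f. intros s. rewrite <- H. auto. Qed.

Lemma PAdef_const (P : Prop) : PAdef (fun _ => P).
Proof.
  destruct (classic P) as [H|H]; [exists (pimp pbot pbot)|exists pbot]; simpl; tauto.
Qed.

Lemma PAdef_imp R1 R2 : PAdef R1 -> PAdef R2 -> PAdef (fun s => R1 s -> R2 s).
Proof. intros [f1 H1] [f2 H2]. exists (pimp f1 f2). intros s. simpl. rewrite H1, H2. tauto. Qed.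

Lemma PAdef_not R : PAdef R -> PAdef (fun s => ~ R s).
Proof. intros [f H]. exists (pimp f pbot). intros s. simpl. rewrite H. tauto. Qed.

Lemma PAdef_and R1 R2 : PAdef R1 -> PAdef R2 -> PAdef (fun s => R1 s /\ R2 s).
Proof.
  intros H1 H2. apply (PAdef_ext (fun s => ~ (R1 s -> ~ R2 s))); [intros s; tauto|].
  apply PAdef_not, PAdef_imp, PAdef_not; auto.
Qed.

Lemma PAdef_or R1 R2 : PAdef R1 -> PAdef R2 -> PAdef (fun s => R1 s \/ R2 s).
Proof.
  intros H1 H2. apply (PAdef_ext (fun s => ~ R1 s -> R2 s)); [intros s; tauto|].
  apply PAdef_imp, H2. apply PAdef_not, H1.
Qed.

Lemma PAdef_all m R : PAdef R -> PAdef (fun s => forall x, R (upd s m x)).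
Proof. intros [f H]. exists (pall m f). intros s. simpl. split; intros H' x; apply H; auto. Qed.

Lemma PAdef_ex m R : PAdef R -> PAdef (fun s => exists x, R (upd s m x)).
Proof.
  intros H. apply (PAdef_ext (fun s => ~ forall x, ~ R (upd s m x))).
  - intros s. split; [|firstorder]. intros H'. apply NNPP. firstorder.
  - apply PAdef_not, (PAdef_all m (fun s => ~ R s)), PAdef_not, H.
Qed.

Lemma PAdef_ex_list {A} (l : list A) (R : A -> (nat -> N) -> Prop) :
  (forall a, In a l -> PAdef (R a)) -> PAdef (fun s => exists a, In a l /\ R a s).
Proof.
  induction l as [|a l IH]; intros H.
  - apply (PAdef_ext (fun _ => False)); [firstorder|]. apply PAdef_const.
  - apply (PAdef_ext (fun s => R a s \/ exists b, In b l /\ R b s)).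
    + intros s. simpl. firstorder congruence.
    + apply PAdef_or; [apply H; simpl; auto|]. apply IH. intros b Hb; apply H; simpl; auto.
Qed.

Lemma PAdef_le y1 y2 : PAdef (fun s => PAle N (s y1) (s y2)).
Proof.
  set (z := S (y1 + y2)).
  apply (PAdef_ext (fun s => exists x, pa N (upd s z x y1) (upd s z x z) = upd s z x y2)).
  - intros s. unfold PAle. setoid_rewrite upd_eq. setoid_rewrite upd_neq; try lia. tauto.
  - apply (PAdef_ex z (fun s => pa N (s y1) (s z) = s y2)).
    exists (peq (padd (pvar y1) (pvar z)) (pvar y2)). simpl. tauto.
Qed.

Lemma PA_ind_def (R : (nat -> N) -> Prop) n s : PAdef R ->
  R (upd s n (pz N)) -> (forall x, R (upd s n x) -> R (upd s n (pa N x (po N)))) ->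
  forall x, R (upd s n x).
Proof.
  intros [f Hf] H0 HS x. apply Hf, PAind; [apply Hf, H0|].
  intros y Hy. apply Hf, HS, Hf, Hy.
Qed.

Lemma PA_ind_def0 (R : (nat -> N) -> Prop) : PAdef R ->
  (forall s, R (upd s 0%nat (pz N))) -> (forall s, R s -> R (upd s 0%nat (pa N (s 0%nat) (po N)))) ->
  forall s, R s.
Proof.
  intros HD H0 HS s. rewrite <- (upd_id s 0%nat). apply PA_ind_def; auto.
  intros x Hx. specialize (HS _ Hx). now rewrite upd_upd, upd_eq in HS.
Qed.

Lemma PA_add_0_l y : pa N (pz N) y = y.
Proof.
  set (R := fun s : nat -> N => pa N (pz N) (s 0%nat) = s 0%nat).
  enough (HR : forall s, R s) by apply (HR (fun _ => y)).
  apply PA_ind_def0; unfold R.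
  - exists (peq (padd pzero (pvar 0)) (pvar 0)). simpl; tauto.
  - intros s; rewrite upd_eq; apply PA3.
  - intros s H; rewrite upd_eq, PA4, H. auto.
Qed.

Lemma PA_add_succ_l x y : pa N (pa N x (po N)) y = pa N (pa N x y) (po N).
Proof.
  set (R := fun s : nat -> N =>
    pa N (pa N (s 1%nat) (po N)) (s 0%nat) = pa N (pa N (s 1%nat) (s 0%nat)) (po N)).
  enough (HR : forall s, R s) by apply (HR (upd (fun _ => y) 1%nat x)).
  apply PA_ind_def0; unfold R.
  - exists (peq (padd (padd (pvar 1) pone) (pvar 0)) (padd (padd (pvar 1) (pvar 0)) pone)).
    simpl; tauto.
  - intros s; rewrite upd_eq, upd_neq by lia. rewrite !PA3. auto.
  - intros s H; rewrite upd_eq, upd_neq by lia. rewrite !PA4, H. auto.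
Qed.

Lemma PA_add_assoc a b x : pa N (pa N a b) x = pa N a (pa N b x).
Proof.
  set (R := fun s : nat -> N =>
    pa N (pa N (s 1%nat) (s 2%nat)) (s 0%nat) = pa N (s 1%nat) (pa N (s 2%nat) (s 0%nat))).
  enough (HR : forall s, R s) by apply (HR (upd (upd (fun _ => x) 1%nat a) 2%nat b)).
  apply PA_ind_def0; unfold R.
  - exists (peq (padd (padd (pvar 1) (pvar 2)) (pvar 0)) (padd (pvar 1) (padd (pvar 2) (pvar 0)))).
    simpl; tauto.
  - intros s; rewrite upd_eq, !upd_neq by lia. rewrite !PA3. auto.
  - intros s H; rewrite upd_eq, !upd_neq by lia. rewrite !PA4, H. auto.
Qed.

Lemma PA_zero_or_succ x : x = pz N \/ exists y, x = pa N y (po N).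
Proof.
  set (R := fun s : nat -> N => s 0%nat = pz N \/ exists y, s 0%nat = pa N y (po N)).
  enough (HR : forall s, R s) by apply (HR (fun _ => x)).
  apply PA_ind_def0; unfold R.
  - apply (PAdef_ext (fun s => s 0%nat = pz N \/
      exists y, upd s 1%nat y 0%nat = pa N (upd s 1%nat y 1%nat) (po N))).
    + intros s. setoid_rewrite upd_eq. setoid_rewrite upd_neq; try lia. tauto.
    + apply PAdef_or; [exists (peq (pvar 0) pzero); simpl; tauto|].
      apply (PAdef_ex 1%nat (fun s => s 0%nat = pa N (s 1%nat) (po N))).
      exists (peq (pvar 0) (padd (pvar 1) pone)). simpl; tauto.
  - intros s; rewrite upd_eq. auto.
  - intros s _; rewrite upd_eq. eauto.
Qed.

Lemma PA_add_succ_neq x y : pa N x (pa N y (po N)) <> x.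
Proof.
  set (R := fun s : nat -> N => forall y, pa N (s 0%nat) (pa N y (po N)) <> s 0%nat).
  enough (HR : forall s, R s) by apply (HR (fun _ => x)).
  apply PA_ind_def0; unfold R.
  - apply (PAdef_ext (fun s => forall y,
      ~ pa N (upd s 1%nat y 0%nat) (pa N (upd s 1%nat y 1%nat) (po N)) = upd s 1%nat y 0%nat)).
    + intros s. setoid_rewrite upd_eq. setoid_rewrite upd_neq; try lia. tauto.
    + apply (PAdef_all 1%nat (fun s => ~ pa N (s 0%nat) (pa N (s 1%nat) (po N)) = s 0%nat)).
      apply PAdef_not. exists (peq (padd (pvar 0) (padd (pvar 1) pone)) (pvar 0)). simpl; tauto.
  - intros s z H; rewrite upd_eq, PA4 in H. eapply PA1; eauto.
  - intros s IH z H; rewrite upd_eq in H.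
    rewrite PA4 in H. apply PA2 in H. rewrite PA_add_succ_l, <- PA4 in H. eapply IH; eauto.
Qed.

Lemma PAle_refl a : PAle N a a.
Proof. exists (pz N). apply PA3. Qed.

Lemma PAle_trans a b c : PAle N a b -> PAle N b c -> PAle N a c.
Proof. intros [z Hz] [w Hw]. exists (pa N z w). rewrite <- PA_add_assoc, Hz. auto. Qed.

Lemma PAle_succ_r a : PAle N a (pa N a (po N)).
Proof. exists (po N). reflexivity. Qed.

Lemma PAle_succ_not b : ~ PAle N (pa N b (po N)) b.
Proof. intros [z H]. rewrite PA_add_succ_l, <- PA4 in H. eapply PA_add_succ_neq; eauto. Qed.

Lemma PAle_total x y : PAle N x y \/ PAle N y x.
Proof.
  set (R := fun s : nat -> N => forall y, PAle N (s 0%nat) y \/ PAle N y (s 0%nat)).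
  enough (HR : forall s, R s) by apply (HR (fun _ => x)).
  apply PA_ind_def0; unfold R.
  - apply (PAdef_ext (fun s => forall y,
      PAle N (upd s 1%nat y 0%nat) (upd s 1%nat y 1%nat) \/ PAle N (upd s 1%nat y 1%nat) (upd s 1%nat y 0%nat))).
    + intros s. setoid_rewrite upd_eq. setoid_rewrite upd_neq; try lia. tauto.
    + apply (PAdef_all 1%nat (fun s => PAle N (s 0%nat) (s 1%nat) \/ PAle N (s 1%nat) (s 0%nat))).
      apply PAdef_or; apply PAdef_le.
  - intros s z; rewrite upd_eq. left. exists z. apply PA_add_0_l.
  - intros s IH z; rewrite upd_eq. destruct (IH z) as [[w Hw]|[w Hw]].
    + destruct (PA_zero_or_succ w) as [->|[v ->]].
      * right. rewrite PA3 in Hw. subst. apply PAle_succ_r.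
      * left. exists v. rewrite PA_add_succ_l, <- PA4. auto.
    + right. exists (pa N w (po N)). rewrite PA4, Hw. auto.
Qed.

Lemma PAle_succ_l_iff a b : PAle N (pa N a (po N)) b <-> ~ PAle N b a.
Proof.
  split.
  - intros Hab Hba. apply (PAle_succ_not a), (PAle_trans _ _ _ Hab Hba).
  - intros Hba. destruct (PAle_total a b) as [[w Hw]|]; [|tauto].
    destruct (PA_zero_or_succ w) as [->|[v ->]].
    + rewrite PA3 in Hw. subst. destruct Hba. apply PAle_refl.
    + exists v. rewrite PA_add_succ_l, <- PA4. auto.
Qed.

Lemma PAmin_l a b : PAle N a b -> PAmin N a b = a.
Proof. intros H. unfold PAmin. destruct (excluded_middle_informative _); tauto. Qed.

Lemma PAmin_r a b : ~ PAle N a b -> PAmin N a b = b.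
Proof. intros H. unfold PAmin. destruct (excluded_middle_informative _); tauto. Qed.

Lemma PAle_of_PAmin a b : PAmin N a b = a -> PAle N a b.
Proof. unfold PAmin. destruct (excluded_middle_informative _); auto. intros ->. apply PAle_refl. Qed.

Lemma PAmin_le_r u x : PAle N (PAmin N u x) x.
Proof. unfold PAmin. destruct (excluded_middle_informative _); auto. apply PAle_refl. Qed.

Lemma PAmin_le_l u x : PAle N (PAmin N u x) u.
Proof.
  unfold PAmin. destruct (excluded_middle_informative _); [apply PAle_refl|].
  destruct (PAle_total u x); tauto.
Qed.

End PeanoArithmetic.

(** * Order facts in models of AA *)

Lemma discrete_d_cases (N : PAModel) x y :
  (x = y /\ discrete_d N x y = 0) \/ (x <> y /\ discrete_d N x y = 1).
Proof. unfold discrete_d. destruct (excluded_middle_informative _); auto. Qed.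

Section LatticeTransfer.
Variables (M : LStructure) (HM : models_AA M).

Lemma models_AA_teval_eq t1 t2 :
  (forall (N : PAModel) e, teval (PA_L N) e t1 = teval (PA_L N) e t2) ->
  forall s, teval M s t1 = teval M s t2.
Proof.
  intros H s. apply d_sep, Rle_antisym; [|apply dist_nonneg].
  apply (models_AA_transfer M HM (adist t1 t2)). intros N e. simpl. rewrite H.
  destruct (discrete_d_cases N (teval (PA_L N) e t2) (teval (PA_L N) e t2)); intuition lra.
Qed.

Let env2 (x y : M) : nat -> M := fun n => match n with O => x | _ => y end.

Lemma Lle_meet_r u x : Lle M (Lmeet M u x) x.
Proof.
  apply (models_AA_teval_eq (tmeet (tmeet (tvar 0) (tvar 1)) (tvar 1)) (tmeet (tvar 0) (tvar 1)))
    with (s := env2 u x).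
  intros N e. apply PAmin_l, PAmin_le_r.
Qed.

Lemma Lle_meet_l u x : Lle M (Lmeet M u x) u.
Proof.
  apply (models_AA_teval_eq (tmeet (tmeet (tvar 0) (tvar 1)) (tvar 0)) (tmeet (tvar 0) (tvar 1)))
    with (s := env2 u x).
  intros N e. apply PAmin_l, PAmin_le_l.
Qed.

Lemma Lle_zero x : Lle M (Lzero M) x.
Proof.
  apply (models_AA_teval_eq (tmeet tzero (tvar 0)) tzero) with (s := env2 x x).
  intros N e. apply PAmin_l. exists (e 0%nat). apply PA_add_0_l.
Qed.

(* Transitivity is the affine condition [d(a /\ c, a) <= d(a /\ b, a) + d(b /\ c, b)]: in a model
   of PA a nonzero right-hand side is at least 1. *)
Lemma Lle_trans a b c : Lle M a b -> Lle M b c -> Lle M a c.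
Proof.
  unfold Lle. intros Hab Hbc.
  set (q := adist (tmeet (tvar 0) (tvar 2)) (tvar 0)).
  set (q1 := adist (tmeet (tvar 0) (tvar 1)) (tvar 0)).
  set (q2 := adist (tmeet (tvar 1) (tvar 2)) (tvar 1)).
  assert (HPA : forall (N : PAModel) e, aeval (PA_L N) e (aplus q (aplus (ascale (-1) q1) (ascale (-1) q2))) <= 0).
  { intros N e. simpl.
    set (x := e 0%nat). set (y := e 1%nat). set (z := e 2%nat).
    destruct (discrete_d_cases N (PAmin N x y) x) as [[E1 F1]|[E1 F1]];
    destruct (discrete_d_cases N (PAmin N y z) y) as [[E2 F2]|[E2 F2]];
    destruct (discrete_d_cases N (PAmin N x z) x) as [[E3 F3]|[E3 F3]]; try lra.
    destruct E3. apply PAmin_l, (PAle_trans N _ y); apply PAle_of_PAmin; auto. }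
  pose proof (models_AA_transfer M HM _ HPA (fun n => match n with O => a | 1%nat => b | _ => c end)) as H.
  simpl in H. rewrite Hab, Hbc, !d_refl in H.
  apply d_sep, Rle_antisym; [lra|apply dist_nonneg].
Qed.

End LatticeTransfer.

(** * Definability of the values of affine formulas *)

Lemma finite_set_max (l : list R) : forall (E : R -> Prop), (forall y, E y -> In y l) -> (exists y, E y) ->
  exists w, E w /\ forall y, E y -> y <= w.
Proof.
  induction l as [|a l IH]; intros E Hl [y0 Hy0]; [destruct (Hl _ Hy0)|].
  destruct (classic (exists y, E y /\ y <> a)) as [Hne|Hsingle].
  - destruct (IH (fun y => E y /\ y <> a)) as [w [[Hw _] Hmax]]; auto.
    { intros y [Hy Hya]. destruct (Hl _ Hy); [congruence|auto]. }
    destruct (classic (E a)) as [Ha|Ha].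
    + exists (Rmax a w). split; [unfold Rmax; destruct (Rle_dec a w); auto|].
      intros y Hy. destruct (Req_dec y a) as [->|Hya]; [apply Rmax_l|].
      eapply Rle_trans; [apply Hmax; auto|apply Rmax_r].
    + exists w. split; auto. intros y Hy. apply Hmax. split; congruence.
  - exists y0. split; auto. intros y Hy.
    assert (y = a) by (apply NNPP; intros Hn; apply Hsingle; eauto).
    assert (y0 = a) by (apply NNPP; intros Hn; apply Hsingle; eauto). lra.
Qed.

Lemma finite_set_min (l : list R) (E : R -> Prop) : (forall y, E y -> In y l) -> (exists y, E y) ->
  exists w, E w /\ forall y, E y -> w <= y.
Proof.
  intros Hl [y Hy].
  destruct (finite_set_max (map Ropp l) (fun y => E (- y))) as [w [Hw Hmin]].
  - intros z Hz. replace z with (- - z) by lra. apply in_map, Hl, Hz.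
  - exists (- y). now rewrite Ropp_involutive.
  - exists (- w). split; auto. intros z Hz. specialize (Hmin (- z)). rewrite Ropp_involutive in Hmin.
    specialize (Hmin Hz). lra.
Qed.

Section FiniteValues.
Variables (L : Lsig) (l : list R) (s : nat -> L) (m : nat) (q : aformula).
Hypothesis Hl : forall s', In (aeval L s' q) l.

Lemma aeval_asup_eq_iff v : aeval L s (asup m q) = v <->
  (forall x, aeval L (upd s m x) q <= v) /\ exists x, aeval L (upd s m x) q = v.
Proof.
  simpl. split.
  - intros H. destruct (finite_set_max l (fun r => exists x : L, r = aeval L (upd s m x) q))
      as [w [[x Hx] Hw]].
    + intros y [x ->]; auto.
    + exists (aeval L (upd s m (Lzero L)) q); eauto.
    + rewrite (Lub_Rbar_eq_max _ w) in H; eauto. subst. split; eauto.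
  - intros [H1 [x H2]]. apply Lub_Rbar_eq_max; eauto. intros y [z ->]; auto.
Qed.

Lemma aeval_ainf_eq_iff v : aeval L s (ainf m q) = v <->
  (forall x, v <= aeval L (upd s m x) q) /\ exists x, aeval L (upd s m x) q = v.
Proof.
  simpl. split.
  - intros H. destruct (finite_set_min l (fun r => exists x : L, r = aeval L (upd s m x) q))
      as [w [[x Hx] Hw]].
    + intros y [x ->]; auto.
    + exists (aeval L (upd s m (Lzero L)) q); eauto.
    + rewrite (Glb_Rbar_eq_min _ w) in H; eauto. subst. split; eauto.
  - intros [H1 [x H2]]. apply Glb_Rbar_eq_min; eauto. intros y [z ->]; auto.
Qed.

End FiniteValues.

(* Contains every value of the formula in a structure whose metric only takes the values 0 and 1. *)
Fixpoint avalues (q : aformula) : list R :=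
  match q with
  | aone => 1 :: nil
  | adist _ _ => 0 :: 1 :: nil
  | aplus p q => flat_map (fun a => map (Rplus a) (avalues q)) (avalues p)
  | ascale c p => map (Rmult c) (avalues p)
  | asup _ p | ainf _ p => avalues p
  end.

Section AffineDefinability.
Variable N : PAModel.

Lemma aeval_in_avalues q : forall s, In (aeval (PA_L N) s q) (avalues q).
Proof.
  induction q; intros s; simpl.
  - auto.
  - unfold discrete_d. destruct (excluded_middle_informative _); auto.
  - apply in_flat_map. exists (aeval (PA_L N) s q1). split; auto. apply in_map; auto.
  - apply in_map; auto.
  - destruct (proj1 (aeval_asup_eq_iff _ _ s n q IHq _) eq_refl) as [_ [x Hx]].
    simpl in Hx. rewrite <- Hx. auto.
  - destruct (proj1 (aeval_ainf_eq_iff _ _ s n q IHq _) eq_refl) as [_ [x Hx]].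
    simpl in Hx. rewrite <- Hx. auto.
Qed.

Lemma PAdef_graph_if_le y y1 y2 c1 c2 :
  PAdef N (fun s => s y = if excluded_middle_informative (PAle N (s y1) (s y2)) then s c1 else s c2).
Proof.
  apply (PAdef_ext N (fun s => (PAle N (s y1) (s y2) /\ s y = s c1) \/
                               (~ PAle N (s y1) (s y2) /\ s y = s c2))).
  - intros s. destruct (excluded_middle_informative _); tauto.
  - apply PAdef_or; apply PAdef_and; try apply PAdef_not; try apply PAdef_le;
      [exists (peq (pvar y) (pvar c1))|exists (peq (pvar y) (pvar c2))]; simpl; tauto.
Qed.

Lemma PAdef_graph_bin (op : N -> N -> N) a b :
  (forall y y1 y2, PAdef N (fun s => s y = op (s y1) (s y2))) ->
  (forall y, (tmaxvar a < y)%nat -> PAdef N (fun s => s y = teval (PA_L N) s a)) ->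
  (forall y, (tmaxvar b < y)%nat -> PAdef N (fun s => s y = teval (PA_L N) s b)) ->
  forall y, (Nat.max (tmaxvar a) (tmaxvar b) < y)%nat ->
  PAdef N (fun s => s y = op (teval (PA_L N) s a) (teval (PA_L N) s b)).
Proof.
  intros Hop Ha Hb y Hy. set (y1 := S y). set (y2 := S y1).
  apply (PAdef_ext N (fun s => exists x1 x2,
     upd (upd s y1 x1) y2 x2 y1 = teval (PA_L N) (upd (upd s y1 x1) y2 x2) a /\
     upd (upd s y1 x1) y2 x2 y2 = teval (PA_L N) (upd (upd s y1 x1) y2 x2) b /\
     upd (upd s y1 x1) y2 x2 y =
       op (upd (upd s y1 x1) y2 x2 y1) (upd (upd s y1 x1) y2 x2 y2))).
  - intros s.
    assert (E : forall x1 x2 t, (tmaxvar t < y)%nat ->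
                  teval (PA_L N) (upd (upd s y1 x1) y2 x2) t = teval (PA_L N) s t).
    { intros x1 x2 t Ht. rewrite !teval_upd_fresh by lia. auto. }
    assert (E1 : forall x1 x2, upd (upd s y1 x1) y2 x2 y1 = x1).
    { intros. rewrite upd_neq by lia. apply upd_eq. }
    assert (E3 : forall x1 x2, upd (upd s y1 x1) y2 x2 y = s y).
    { intros. rewrite !upd_neq by lia. auto. }
    setoid_rewrite E1. setoid_rewrite upd_eq. setoid_rewrite E3. split.
    + intros [x1 [x2 [H1 [H2 H3]]]]. rewrite E in H1, H2 by lia. congruence.
    + intros H. exists (teval (PA_L N) s a), (teval (PA_L N) s b). rewrite !E by lia. auto.
  - apply (PAdef_ex N y1 (fun s => exists x2,
      upd s y2 x2 y1 = teval (PA_L N) (upd s y2 x2) a /\ upd s y2 x2 y2 = teval (PA_L N) (upd s y2 x2) b /\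
      upd s y2 x2 y = op (upd s y2 x2 y1) (upd s y2 x2 y2))).
    apply (PAdef_ex N y2 (fun s =>
      s y1 = teval (PA_L N) s a /\ s y2 = teval (PA_L N) s b /\ s y = op (s y1) (s y2))).
    repeat apply PAdef_and; auto; [apply Ha|apply Hb]; lia.
Qed.

Lemma PAdef_teval_graph t : forall y, (tmaxvar t < y)%nat -> PAdef N (fun s => s y = teval (PA_L N) s t).
Proof.
  induction t; simpl; intros y Hy.
  - exists (peq (pvar y) (pvar n)). simpl. tauto.
  - exists (peq (pvar y) pzero). simpl. tauto.
  - exists (peq (pvar y) pone). simpl. tauto.
  - apply (PAdef_graph_bin (pa N)); auto.
    intros y0 y1 y2. exists (peq (pvar y0) (padd (pvar y1) (pvar y2))). simpl. tauto.
  - apply (PAdef_graph_bin (pm N)); auto.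
    intros y0 y1 y2. exists (peq (pvar y0) (pmul (pvar y1) (pvar y2))). simpl. tauto.
  - apply (PAdef_graph_bin (PAmin N)); auto.
    intros y0 y1 y2. apply PAdef_graph_if_le.
  - apply (PAdef_graph_bin (PAmax N)); auto.
    intros y0 y1 y2. apply PAdef_graph_if_le.
Qed.

Lemma PAdef_teval_eq t1 t2 : PAdef N (fun s => teval (PA_L N) s t1 = teval (PA_L N) s t2).
Proof.
  set (y := S (tmaxvar t1 + tmaxvar t2)).
  apply (PAdef_ext N (fun s => exists x,
    upd s y x y = teval (PA_L N) (upd s y x) t1 /\ upd s y x y = teval (PA_L N) (upd s y x) t2)).
  - intros s. setoid_rewrite upd_eq. setoid_rewrite teval_upd_fresh; try lia. split.
    + intros [x [H1 H2]]. congruence.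
    + intros H. eauto.
  - apply (PAdef_ex N y (fun s => s y = teval (PA_L N) s t1 /\ s y = teval (PA_L N) s t2)).
    apply PAdef_and; apply PAdef_teval_graph; lia.
Qed.

Lemma PAdef_aeval_of_eq q (g : R -> Prop) :
  (forall v, PAdef N (fun s => aeval (PA_L N) s q = v)) -> PAdef N (fun s => g (aeval (PA_L N) s q)).
Proof.
  intros H. apply (PAdef_ext N (fun s => exists w, In w (avalues q) /\ (aeval (PA_L N) s q = w /\ g w))).
  - intros s. split; [intros [w [_ [-> Hw]]]; auto|].
    intros Hg. exists (aeval (PA_L N) s q). split; auto. apply aeval_in_avalues.
  - apply PAdef_ex_list. intros w _. apply PAdef_and; auto. apply PAdef_const.
Qed.

Lemma PAdef_aeval_eq q : forall v, PAdef N (fun s => aeval (PA_L N) s q = v).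
Proof.
  induction q; intros v; simpl.
  - apply PAdef_const.
  - apply (PAdef_ext N (fun s => (teval (PA_L N) s t = teval (PA_L N) s t0 /\ 0 = v) \/
                                 (~ teval (PA_L N) s t = teval (PA_L N) s t0 /\ 1 = v))).
    + intros s. simpl. unfold discrete_d. destruct (excluded_middle_informative _); intuition lra.
    + apply PAdef_or; apply PAdef_and; try apply PAdef_not; try apply PAdef_teval_eq; apply PAdef_const.
  - apply (PAdef_ext N (fun s => exists w, In w (avalues q1) /\
                                 (aeval (PA_L N) s q1 = w /\ aeval (PA_L N) s q2 = v - w))).
    + intros s. split; [intros [w [_ [H1 H2]]]; lra|].
      intros H. exists (aeval (PA_L N) s q1). split; [apply aeval_in_avalues|]. split; auto; lra.
    + apply PAdef_ex_list. intros w _. apply PAdef_and; auto.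
  - apply (PAdef_aeval_of_eq q (fun x => r * x = v) IHq).
  - apply (PAdef_ext N (fun s => (forall x, aeval (PA_L N) (upd s n x) q <= v) /\
                                 exists x, aeval (PA_L N) (upd s n x) q = v)).
    + intros s. symmetry. apply (aeval_asup_eq_iff (PA_L N) _ s n q (aeval_in_avalues q)).
    + apply PAdef_and.
      * apply (PAdef_all N n (fun s => aeval (PA_L N) s q <= v)), (PAdef_aeval_of_eq q (fun x => x <= v)), IHq.
      * apply (PAdef_ex N n (fun s => aeval (PA_L N) s q = v)), IHq.
  - apply (PAdef_ext N (fun s => (forall x, v <= aeval (PA_L N) (upd s n x) q) /\
                                 exists x, aeval (PA_L N) (upd s n x) q = v)).
    + intros s. symmetry. apply (aeval_ainf_eq_iff (PA_L N) _ s n q (aeval_in_avalues q)).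
    + apply PAdef_and.
      * apply (PAdef_all N n (fun s => v <= aeval (PA_L N) s q)), (PAdef_aeval_of_eq q (fun x => v <= x)), IHq.
      * apply (PAdef_ex N n (fun s => aeval (PA_L N) s q = v)), IHq.
Qed.

Lemma PAdef_aeval q (g : R -> Prop) : PAdef N (fun s => g (aeval (PA_L N) s q)).
Proof. apply PAdef_aeval_of_eq, PAdef_aeval_eq. Qed.

End AffineDefinability.

(** * The jump condition *)

Lemma list_gap_from (a : R) (l : list R) :
  exists g, 0 < g /\ forall y, In y l -> y <> a -> g <= Rabs (y - a).
Proof.
  induction l as [|b l [g [Hg H]]]; [exists 1; split; [lra|intros y []]|].
  destruct (Req_dec b a) as [->|Hb].
  - exists g. split; auto. intros y [<-|Hy] Hya; [congruence|auto].
  - exists (Rmin g (Rabs (b - a))). split.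
    + apply Rmin_glb_lt; auto. apply Rabs_pos_lt. lra.
    + intros y [<-|Hy] Hya; [apply Rmin_r|]. eapply Rle_trans; [apply Rmin_l|auto].
Qed.

Lemma list_min_gap (l : list R) : exists g, 0 < g /\ forall x y, In x l -> In y l -> x < y -> g <= y - x.
Proof.
  induction l as [|a l [g1 [Hg1 H1]]]; [exists 1; split; [lra|intros x y []]|].
  destruct (list_gap_from a l) as [g2 [Hg2 H2]].
  exists (Rmin g1 g2). split; [apply Rmin_glb_lt; auto|].
  pose proof (Rmin_l g1 g2). pose proof (Rmin_r g1 g2).
  intros x y [<-|Hx] [<-|Hy] Hxy; try lra.
  - assert (g2 <= Rabs (y - a)) by (apply H2; auto; lra). rewrite Rabs_right in H3 by lra. lra.
  - assert (g2 <= Rabs (x - a)) by (apply H2; auto; lra). rewrite Rabs_left in H3 by lra. lra.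
  - assert (g1 <= y - x) by (apply H1; auto). lra.
Qed.

Definition adiff (p q : aformula) : aformula := aplus p (ascale (-1) q).

Definition var_b (psi : aformula) (X : nat) : nat := S (amaxvar psi + X).
Definition var_v (psi : aformula) (X : nat) : nat := S (var_b psi X).

Definition step_gain (L : Lsig) (f : L -> R) (b v : L) : R :=
  f (Lmeet L (Ladd L (Lmeet L v b) (Lone L)) b) - f (Lmeet L v b).

(* With [b] the variable [var_b psi X] and [f x = psi[x/X]], the condition
   [f b - f 0 - C * sup_v (f ((v /\ b + 1) /\ b) - f (v /\ b)) <= 0]. *)
Definition jump_condition (psi : aformula) (X : nat) (C : R) : aformula :=
  let b := tvar (var_b psi X) in
  let a := tmeet (tvar (var_v psi X)) b in
  adiff (adiff (asubst psi X b) (asubst psi X tzero))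
        (ascale C (asup (var_v psi X) (adiff (asubst psi X (tmeet (tadd a tone) b)) (asubst psi X a)))).

Lemma aeval_jump_condition L (HL : unit_dist L) psi X C s (f : L -> R) :
  (forall x, aeval L (upd s X x) psi = f x) ->
  (forall x y, f x <= f y + asubst_lip psi * Defs.dist L x y) ->
  aeval L s (jump_condition psi X C) =
    f (s (var_b psi X)) - f (Lzero L)
    - C * real (Lub_Rbar (fun r => exists v, r = step_gain L f (s (var_b psi X)) v)).
Proof.
  intros Hf Hlip. set (B := var_b psi X). set (V := var_v psi X).
  assert (Hsub : forall e t, ~ tfree X t -> (forall x, aeval L (upd e X x) psi = f x) ->
                   aeval L e (asubst psi X t) = f (teval L e t)).
  { intros e t Ht He. apply aeval_asubst; auto. }
  assert (HfV : forall v x, aeval L (upd (upd s V v) X x) psi = f x).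
  { intros v x. rewrite aeval_upd_upd_fresh, Hf; auto; unfold V, var_v, var_b; lia. }
  unfold jump_condition, adiff. cbn [aeval].
  rewrite !(Hsub s) by (auto; simpl; unfold B, var_b; lia).
  rewrite (Lub_Rbar_eqset _ (fun r => exists v, r = step_gain L f (s B) v)); [simpl; fold B; lra|].
  intros r. split; intros [v ->]; exists v;
    rewrite !(Hsub (upd s V v)) by (auto; simpl; unfold V, B, var_v, var_b; lia);
    cbn [teval]; fold V B; rewrite upd_eq, upd_neq by (unfold V, var_v; lia); unfold step_gain; lra.
Qed.

Section PeanoJump.
Variables (N : PAModel) (psi : aformula) (X : nat).

Lemma PA_aeval_lip s x y :
  aeval (PA_L N) (upd s X x) psi <= aeval (PA_L N) (upd s X y) psi + asubst_lip psi * Defs.dist (PA_L N) x y.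
Proof.
  unfold asubst_lip. change (Defs.dist (PA_L N) x y) with (discrete_d N x y).
  destruct (discrete_d_cases N x y) as [[-> ->]|[_ ->]]; [lra|].
  pose proof (aeval_abs_le _ (PA_unit_dist N) psi (upd s X x)).
  pose proof (aeval_abs_le _ (PA_unit_dist N) psi (upd s X y)).
  apply Rabs_le_iff in H, H0. lra.
Qed.

Lemma aeval_asubst_PA t s : ~ tfree X t ->
  aeval (PA_L N) s (asubst psi X t) = aeval (PA_L N) (upd s X (teval (PA_L N) s t)) psi.
Proof.
  intros Ht. apply (aeval_asubst _ (PA_unit_dist N) _ _ _ _ (fun x => aeval (PA_L N) (upd s X x) psi));
    auto using PA_aeval_lip.
Qed.

Let increase_has_step (e : nat -> N) : Prop :=
  aeval (PA_L N) (upd e X (pz N)) psi < aeval (PA_L N) (upd e X (e (var_b psi X))) psi ->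
  exists a, PAle N (pa N a (po N)) (e (var_b psi X)) /\
            aeval (PA_L N) (upd e X a) psi < aeval (PA_L N) (upd e X (pa N a (po N))) psi.

Lemma PAdef_increase_has_step : PAdef N increase_has_step.
Proof.
  set (B := var_b psi X). set (V := var_v psi X).
  assert (HV : (amaxvar psi < V)%nat /\ V <> X /\ V <> B) by (unfold V, B, var_v, var_b; lia).
  set (f := fun (e : nat -> N) x => aeval (PA_L N) (upd e X x) psi).
  apply (PAdef_ext N (fun e =>
    0 < aeval (PA_L N) e (adiff (asubst psi X (tvar B)) (asubst psi X tzero)) ->
    exists a, ~ PAle N (upd e V a B) (upd e V a V) /\
      0 < aeval (PA_L N) (upd e V a) (adiff (asubst psi X (tadd (tvar V) tone)) (asubst psi X (tvar V))))).
  - intros e.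
    assert (Eb : aeval (PA_L N) e (adiff (asubst psi X (tvar B)) (asubst psi X tzero))
                 = f e (e B) - f e (pz N)).
    { unfold adiff. cbn [aeval]. rewrite !aeval_asubst_PA by (simpl; unfold B, var_b; lia).
      unfold f. simpl. lra. }
    assert (Ea : forall a, aeval (PA_L N) (upd e V a)
                   (adiff (asubst psi X (tadd (tvar V) tone)) (asubst psi X (tvar V)))
                 = f e (pa N a (po N)) - f e a).
    { intros a. unfold adiff. cbn [aeval]. rewrite !aeval_asubst_PA by (simpl; lia).
      unfold f. simpl. rewrite upd_eq, !aeval_upd_upd_fresh by lia. simpl. lra. }
    rewrite Eb. setoid_rewrite Ea. setoid_rewrite upd_eq. setoid_rewrite upd_neq; [|lia].
    unfold increase_has_step. fold B. setoid_rewrite PAle_succ_l_iff.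
    split; intros H Hlt; (destruct H as [a Ha]; [unfold f in *; lra|]);
      exists a; (split; [tauto|unfold f in *; lra]).
  - apply PAdef_imp; [apply (PAdef_aeval N _ (fun r => 0 < r))|].
    apply (PAdef_ex N V (fun e => ~ PAle N (e B) (e V) /\
      0 < aeval (PA_L N) e (adiff (asubst psi X (tadd (tvar V) tone)) (asubst psi X (tvar V))))).
    apply PAdef_and; [apply PAdef_not, PAdef_le|apply (PAdef_aeval N _ (fun r => 0 < r))].
Qed.

Lemma PA_increase_has_step s b :
  aeval (PA_L N) (upd s X (pz N)) psi < aeval (PA_L N) (upd s X b) psi ->
  exists a, PAle N (pa N a (po N)) b /\
            aeval (PA_L N) (upd s X a) psi < aeval (PA_L N) (upd s X (pa N a (po N))) psi.
Proof.
  set (B := var_b psi X).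
  assert (Hf : forall y x, aeval (PA_L N) (upd (upd s B y) X x) psi = aeval (PA_L N) (upd s X x) psi)
    by (intros; apply aeval_upd_upd_fresh; unfold B, var_b; lia).
  assert (Hind : forall x, increase_has_step (upd s B x)).
  { apply PA_ind_def; [exact PAdef_increase_has_step| |]; unfold increase_has_step; fold B.
    - rewrite upd_eq, !Hf. intros; lra.
    - intros x IH. rewrite upd_eq in IH |- *. setoid_rewrite Hf in IH. setoid_rewrite Hf.
      intros Hlt.
      destruct (Rlt_dec (aeval (PA_L N) (upd s X x) psi) (aeval (PA_L N) (upd s X (pa N x (po N))) psi))
        as [Hup|Hflat].
      + exists x. split; [apply PAle_refl|auto].
      + destruct IH as [a [Hax Ha]]; [lra|].
        exists a. split; auto. apply (PAle_trans N _ x); auto. apply PAle_succ_r. }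
  specialize (Hind b). unfold increase_has_step in Hind. fold B in Hind.
  rewrite upd_eq in Hind. setoid_rewrite Hf in Hind. exact Hind.
Qed.

End PeanoJump.

(* A nonzero increase of [psi] along one successor step is at least the least gap [g] between
   two values of [psi], while [psi(b) - psi(0) <= 2 * abound psi]. *)
Lemma PA_jump_condition psi X :
  exists C, 0 < C /\ forall (N : PAModel) s, aeval (PA_L N) s (jump_condition psi X C) <= 0.
Proof.
  destruct (list_min_gap (avalues psi)) as [g [Hg Hgap]].
  pose proof (abound_nonneg psi) as Hb0.
  set (C := 2 * abound psi / g + 1).
  assert (HCg : C * g = 2 * abound psi + g) by (unfold C; field; lra).
  assert (HC : 0 < C).
  { unfold C. assert (0 <= 2 * abound psi / g) by (apply Rmult_le_pos; [lra|left; apply Rinv_0_lt_compat, Hg]).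
    lra. }
  exists C. split; [exact HC|]. intros N s.
  set (f := fun x => aeval (PA_L N) (upd s X x) psi).
  rewrite (aeval_jump_condition _ (PA_unit_dist N) psi X C s f)
    by (intros; unfold f; auto using PA_aeval_lip).
  set (b := s (var_b psi X)).
  set (J := real (Lub_Rbar (fun r => exists v, r = step_gain (PA_L N) f b v))).
  assert (Hf : forall x, - abound psi <= f x <= abound psi).
  { intros x. apply Rabs_le_iff, (aeval_abs_le _ (PA_unit_dist N)). }
  assert (HJ : forall v, step_gain (PA_L N) f b v <= J).
  { intros v. apply (Lub_Rbar_between _ _ (2 * abound psi)); eauto.
    intros r [w ->]. unfold step_gain. pose proof (Hf (Lmeet (PA_L N) w b)).
    pose proof (Hf (Lmeet (PA_L N) (Ladd (PA_L N) (Lmeet (PA_L N) w b) (Lone (PA_L N))) b)). lra. }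
  assert (HJ0 : 0 <= J).
  { specialize (HJ b). unfold step_gain in HJ. simpl in HJ.
    rewrite (PAmin_l N b b (PAle_refl N b)), (PAmin_r N _ b (PAle_succ_not N b)) in HJ. lra. }
  simpl. destruct (Rlt_dec (f (pz N)) (f b)) as [Hlt|Hge].
  - destruct (PA_increase_has_step N psi X s b Hlt) as [a [Hab Hfa]].
    specialize (HJ a). unfold step_gain in HJ. simpl in HJ.
    assert (Ha : PAle N a b) by (apply (PAle_trans N _ _ _ (PAle_succ_r N a) Hab)).
    rewrite (PAmin_l N a b Ha), (PAmin_l N _ b Hab) in HJ.
    assert (g <= f (pa N a (po N)) - f a) by (apply Hgap; auto; apply aeval_in_avalues).
    assert (C * g <= C * J) by (apply Rmult_le_compat_l; lra).
    pose proof (Hf b). pose proof (Hf (pz N)). lra.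
  - assert (0 <= C * J) by (apply Rmult_le_pos; lra). lra.
Qed.

(** * The supremum of the distance to D below a point *)

Lemma asubst_lip_of_lip1 (M : LStructure) psi (f : M -> R) :
  (forall x y, f x <= f y + Defs.dist M x y) ->
  forall x y, f x <= f y + asubst_lip psi * Defs.dist M x y.
Proof.
  intros H x y. specialize (H x y). pose proof (dist_nonneg M x y). pose proof (abound_nonneg psi).
  unfold asubst_lip. nra.
Qed.

Section DistanceBelow.
Variables (M : LStructure) (D : M -> Prop) (d0 : M).
Hypothesis HD0 : D d0.

Lemma dist_set_le_dist y z : D z -> dist_set M y D <= Defs.dist M y z.
Proof. intros Hz. apply (Glb_Rbar_between _ _ 0); eauto. intros r [w [_ ->]]. apply dist_nonneg. Qed.

Lemma dist_set_nonneg y : 0 <= dist_set M y D.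
Proof. apply (Glb_Rbar_between _ (Defs.dist M y d0)); eauto. intros r [w [_ ->]]. apply dist_nonneg. Qed.

Lemma dist_set_of_in y : D y -> dist_set M y D = 0.
Proof. intros Hy. pose proof (dist_set_le_dist y y Hy). rewrite d_refl in H. pose proof (dist_set_nonneg y). lra. Qed.

Lemma dist_set_lip y y' : dist_set M y D <= dist_set M y' D + Defs.dist M y y'.
Proof.
  enough (dist_set M y D - Defs.dist M y y' <= dist_set M y' D) by lra.
  apply (Glb_Rbar_between _ (Defs.dist M y' d0)); eauto.
  intros r [z [Hz ->]]. pose proof (dist_set_le_dist y z Hz). pose proof (d_tri M y y' z). lra.
Qed.

(* [sup_{u <= x} d(u, D)], written with [u /\ x] so that [u] ranges over all of [M]. *)
Definition sup_dist_below (x : M) : R :=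
  real (Lub_Rbar (fun r => exists u : M, r = dist_set M (Lmeet M u x) D)).

Lemma sup_dist_below_ge u x : dist_set M (Lmeet M u x) D <= sup_dist_below x.
Proof.
  apply (Lub_Rbar_between _ _ 1); eauto.
  intros r [v ->]. apply (Rle_trans _ _ _ (dist_set_le_dist _ d0 HD0)), d_diam.
Qed.

Lemma sup_dist_below_le x c : (forall u, dist_set M (Lmeet M u x) D <= c) -> sup_dist_below x <= c.
Proof. intros H. apply (Lub_Rbar_between _ (dist_set M (Lmeet M x x) D)); eauto. intros r [v ->]; auto. Qed.

Lemma sup_dist_below_lip x y : sup_dist_below x <= sup_dist_below y + Defs.dist M x y.
Proof.
  apply sup_dist_below_le. intros u.
  pose proof (dist_set_lip (Lmeet M u x) (Lmeet M u y)). pose proof (sup_dist_below_ge u y).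
  pose proof (lip_meet M u u x y) as Hl. rewrite d_refl, Rmax_right in Hl by apply dist_nonneg. lra.
Qed.

Lemma sup_dist_below_mono (HM : models_AA M) x y : Lle M x y -> sup_dist_below x <= sup_dist_below y.
Proof.
  intros Hxy. apply sup_dist_below_le. intros u.
  rewrite <- (Lle_trans M HM _ _ _ (Lle_meet_r M HM u x) Hxy). apply sup_dist_below_ge.
Qed.

Lemma sup_dist_below_eq0 x : (forall u, D (Lmeet M u x)) -> sup_dist_below x = 0.
Proof.
  intros H. apply Rle_antisym.
  - apply sup_dist_below_le. intros u. rewrite dist_set_of_in; auto. lra.
  - rewrite <- (dist_set_of_in (Lmeet M x x)); auto. apply sup_dist_below_ge.
Qed.

Lemma sup_dist_below_lt_nbhd eps a :
  sup_dist_below a < eps -> forall u, Lle M u a -> eps_nbhd M D eps u.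
Proof.
  intros Ha u Hu. unfold eps_nbhd, Lle in *. rewrite <- Hu.
  eapply Rle_lt_trans; [apply sup_dist_below_ge|exact Ha].
Qed.

Definition var_x (p : aformula) : nat := S (amaxvar p).

Definition sup_dist_formula (p : aformula) : aformula :=
  asup (S (var_x p)) (asubst p 0 (tmeet (tvar (S (var_x p))) (tvar (var_x p)))).

Variables (p : aformula) (s0 : nat -> M).
Hypothesis Hp : forall x, dist_set M x D = aeval M (upd s0 0 x) p.

Lemma aeval_sup_dist_formula e x : (forall n, (0 < n <= amaxvar p)%nat -> e n = s0 n) ->
  aeval M (upd e (var_x p) x) (sup_dist_formula p) = sup_dist_below x.
Proof.
  intros He. set (X := var_x p). set (U := S X).
  assert (Hu : forall u, aeval M (upd (upd e X x) U u) (asubst p 0 (tmeet (tvar U) (tvar X)))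
                         = dist_set M (Lmeet M u x) D).
  { intros u. rewrite (aeval_asubst M (LStructure_unit_dist M) p 0 _ _ (fun y => dist_set M y D)).
    - simpl. rewrite upd_eq, upd_neq, upd_eq by (unfold U; lia). reflexivity.
    - simpl. unfold U, X, var_x. lia.
    - intros y. rewrite Hp. apply aeval_agree. intros n Hn. unfold upd.
      destruct (Nat.eqb_spec n 0), (Nat.eqb_spec n U), (Nat.eqb_spec n X);
        try (unfold U, X, var_x in *; lia); auto.
      apply He. lia.
    - apply asubst_lip_of_lip1, dist_set_lip. }
  unfold sup_dist_formula, sup_dist_below. fold X U. cbn [aeval]. f_equal. apply Lub_Rbar_eqset.
  intros r. split; intros [u ->]; exists u; auto.
Qed.

Lemma sup_dist_below_jump (HM : models_AA M) :
  exists C, 0 < C /\ forall b r, C * r < sup_dist_below b - sup_dist_below (Lzero M) ->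
    exists v, r < step_gain M sup_dist_below b v.
Proof.
  set (psi := sup_dist_formula p). set (X := var_x p).
  destruct (PA_jump_condition psi X) as [C [HC HPA]].
  exists C. split; [exact HC|]. intros b r Hr.
  set (s := upd s0 (var_b psi X) b).
  assert (Hs : forall x, aeval M (upd s X x) psi = sup_dist_below x).
  { intros x. apply aeval_sup_dist_formula. intros n Hn. apply upd_neq. unfold var_b, X, var_x. lia. }
  pose proof (models_AA_transfer M HM _ HPA s) as H.
  rewrite (aeval_jump_condition M (LStructure_unit_dist M) psi X C s _ Hs) in H
    by (apply asubst_lip_of_lip1, sup_dist_below_lip).
  unfold s in H. rewrite upd_eq in H.
  apply NNPP. intros Hno.
  enough (Lub_Rbar (fun r => exists v, r = step_gain M sup_dist_below b v) <= r).
  { assert (C * Lub_Rbar (fun r => exists v, r = step_gain M sup_dist_below b v) <= C * r)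
      by (apply Rmult_le_compat_l; lra). lra. }
  apply (Lub_Rbar_between _ (step_gain M sup_dist_below b b)); eauto.
  intros z [v ->]. apply Rnot_lt_le. intros Hv. apply Hno. eauto.
Qed.

End DistanceBelow.

(** * Descent *)

Lemma no_infinite_descent {A} (P : A -> Prop) (G : A -> R) delta c :
  0 < delta -> P c -> (forall a, P a -> 0 <= G a) ->
  (forall b, P b -> exists a, P a /\ G a <= G b - delta) -> False.
Proof.
  intros Hd Hc Hpos Hstep.
  assert (Hiter : forall n, exists a, P a /\ G a <= G c - INR n * delta).
  { induction n as [|n [a [Ha HGa]]]; [exists c; simpl; split; auto; lra|].
    destruct (Hstep a Ha) as [a' [Ha' HGa']]. exists a'. split; auto. rewrite S_INR. lra. }
  destruct (INR_unbounded (G c / delta)) as [n Hn].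
  destruct (Hiter n) as [a [Ha HGa]]. specialize (Hpos a Ha).
  assert (G c < INR n * delta) by (apply (Rmult_lt_compat_r delta) in Hn; [field_simplify in Hn|]; lra).
  lra.
Qed.

Lemma descent_step (M : LStructure) (HM : models_AA M) (I : M -> Prop) (G : M -> R) r b :
  is_cut M I -> (forall x, I x -> G x = 0) -> (forall x y, Lle M x y -> G x <= G y) -> 0 <= r ->
  (exists v, r < step_gain M G b v) -> exists a, ~ I a /\ G a < G b - r.
Proof.
  intros [_ [Hdown Hsucc]] HG0 Hmono Hr [v Hv]. unfold step_gain in Hv.
  set (a := Lmeet M v b) in *. set (a' := Lmeet M (Ladd M a (Lone M)) b) in *.
  exists a. split.
  - intros Ha.
    assert (Ia' : I a') by (apply (Hdown _ (Ladd M a (Lone M))); [apply Lle_meet_l|apply Hsucc]; auto).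
    rewrite (HG0 _ Ha), (HG0 _ Ia') in Hv. lra.
  - assert (G a' <= G b) by (apply Hmono, Lle_meet_r, HM). lra.
Qed.

Theorem mainTheorem6 (M : LStructure) (HM : models_AA M)
  (I : M -> Prop) (HI : proper_cut M I)
  (D : M -> Prop) (HD : formula_definable M D)
  (HID : forall x, I x -> D x) :
  forall eps : R, 0 < eps ->
    exists a : M, ~ I a /\
      (forall u : M, Lle M u a -> eps_nbhd M D eps u).
Proof.
  intros eps Heps.
  destruct HI as [HIcut [c Hc]]. pose proof HIcut as [[x0 Hx0] [Hdown _]].
  destruct HD as [_ [p [s0 Hp]]].
  assert (Hd0 : D x0) by auto.
  set (G := sup_dist_below M D).
  assert (HG0 : forall x, I x -> G x = 0).
  { intros x Hx. apply (sup_dist_below_eq0 M D x0 Hd0). intros u.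
    apply HID, (Hdown _ x); auto. apply Lle_meet_r, HM. }
  assert (HI0 : I (Lzero M)) by (apply (Hdown _ x0); auto; apply Lle_zero, HM).
  destruct (sup_dist_below_jump M D x0 Hd0 p s0 Hp HM) as [C [HC Hjump]].
  apply NNPP. intros Hcon.
  assert (Hfar : forall a, ~ I a -> eps <= G a).
  { intros a Ha. apply Rnot_lt_le. intros Hlt. apply Hcon. exists a.
    split; auto. apply (sup_dist_below_lt_nbhd M D x0 Hd0); auto. }
  set (delta := eps / (2 * C)).
  assert (Hdelta : 0 < delta) by (apply Rdiv_lt_0_compat; lra).
  apply (no_infinite_descent (fun a => ~ I a) G delta c); auto.
  - intros a Ha. pose proof (Hfar a Ha). lra.
  - intros b Hb.
    destruct (descent_step M HM I G delta b HIcut HG0) as [a [Ha HGa]];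
      [apply (sup_dist_below_mono M D x0 Hd0 HM)|lra| |exists a; split; auto; lra].
    apply Hjump. fold G. rewrite (HG0 _ HI0). pose proof (Hfar b Hb).
    replace (C * delta) with (eps / 2) by (unfold delta; field; lra). lra.
Qed.
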